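(* Let $A_i, A_j, A_k, A_l$ be four distinct points lying on a circle in the Euclidean plane, in anticlockwise order (i.e. going around the circle anticlockwise one meets $A_i, A_j, A_k, A_l$ in this cyclic order). Then \[ \begin{vmatrix} x_{kl} & S_{ikl} & S_{jkl}\\ -x_{ij} & S_{ijk} & S_{ijl}\\ 0 & x_{ik} & x_{jl} \end{vmatrix} = \begin{vmatrix} x_{kl} & S_{ikl} & S_{jkl}\\ x_{ij} & S_{ijl} & S_{ijk}\\ 0 & x_{il} & x_{jk} \end{vmatrix} = \begin{vmatrix} x_{jk} & S_{ijk} & S_{jkl}\\ -x_{il} & S_{ikl} & S_{ijl}\\ 0 & x_{ik} & x_{jl} \end{vmatrix} = 0.\]
   Context: For points $A_p=(x_p,y_p)$ in the plane, $x_{pq}:=(x_q-x_p)^2+(y_q-y_p)^2$ denotes the squared distance between $A_p$ and $A_q$, and $S_{pqr}:=2[(x_q-x_p)(y_r-y_p)-(y_q-y_p)(x_r-x_p)]$ denotes four times the signed area of the triangle $A_pA_qA_r$ (positive when $A_p,A_q,A_r$ are ordered anticlockwise). *)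

From Stdlib Require Import Reals.
Open Scope R_scope.

Definition point := (R * R)%type.

(* x_{pq}: squared distance between A_p and A_q. *)
Definition sqd (P Q : point) : R :=
  (fst Q - fst P)^2 + (snd Q - snd P)^2.

(* S_{pqr} = 2[(x_q-x_p)(y_r-y_p) - (y_q-y_p)(x_r-x_p)]:
   four times the signed area of triangle PQR. *)
Definition S3 (P Q Rr : point) : R :=
  2 * ((fst Q - fst P) * (snd Rr - snd P) - (snd Q - snd P) * (fst Rr - fst P)).

Definition det3 (a b c d e f g h i : R) : R :=
  a * (e * i - f * h) - b * (d * i - f * g) + c * (d * h - e * g).

Definition circ_pt (C : point) (r t : R) : point :=
  (fst C + r * cos t, snd C + r * sin t).

(* A1, A2, A3, A4 lie on a common circle and, going around the circle
   anticlockwise, one meets A1, A2, A3, A4 in this cyclic order: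
   their angular parameters can be chosen strictly increasing within
   one turn. *)
Definition concyclic_ccw (A1 A2 A3 A4 : point) : Prop :=
  exists (C : point) (r t1 t2 t3 t4 : R),
    0 < r /\
    A1 = circ_pt C r t1 /\ A2 = circ_pt C r t2 /\
    A3 = circ_pt C r t3 /\ A4 = circ_pt C r t4 /\
    t1 < t2 /\ t2 < t3 /\ t3 < t4 /\ t4 < t1 + 2 * PI.

(** For a point P and a triangle ABC with circumcentre O, the barycentric
    weights S_PBC/S_ABC, -S_PAC/S_ABC, S_PAB/S_ABC of P turn the weighted sum
    of the squared distances from P to A, B, C into |OA|^2 - |OP|^2; hence
    S_PBC x_PA - S_PAC x_PB + S_PAB x_PC vanishes whenever P lies on the
    circle through A, B, C.  Applying this with each of the four points in
    the role of P gives four relations, linear in the areas S, and each of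
    the three determinants is an explicit combination of them with
    coefficients linear in the squared distances. *)

From Stdlib Require Import Reals.
Open Scope R_scope.

(* Minus S3 A B C times the power of P with respect to the circle ABC. *)
Definition power_form (P A B C : point) : R :=
  S3 P B C * sqd P A - S3 P A C * sqd P B + S3 P A B * sqd P C.

Lemma power_form_centered (O P A B C : point) :
  power_form P A B C =
  S3 P B C * sqd O A - S3 P A C * sqd O B + S3 P A B * sqd O C
  - S3 A B C * sqd O P.
Proof. unfold power_form, S3, sqd; ring. Qed.

Lemma power_form_concyclic (O P A B C : point) (rho : R) :
  sqd O P = rho -> sqd O A = rho -> sqd O B = rho -> sqd O C = rho ->
  power_form P A B C = 0.
Proof.
  intros hP hA hB hC.
  rewrite (power_form_centered O), hP, hA, hB, hC.
  unfold S3; ring.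
Qed.

Lemma sqd_circ_pt (C : point) (r t : R) : sqd C (circ_pt C r t) = r ^ 2.
Proof.
  unfold sqd, circ_pt; cbn [fst snd].
  rewrite <- (Rmult_1_r (r ^ 2)), <- (sin2_cos2 t).
  unfold Rsqr; ring.
Qed.

Section FourPoints.

Variables Ai Aj Ak Al : point.

Local Notation xij := (sqd Ai Aj).
Local Notation xik := (sqd Ai Ak).
Local Notation xil := (sqd Ai Al).
Local Notation xjk := (sqd Aj Ak).
Local Notation xjl := (sqd Aj Al).
Local Notation xkl := (sqd Ak Al).
Local Notation Sijk := (S3 Ai Aj Ak).
Local Notation Sijl := (S3 Ai Aj Al).
Local Notation Sikl := (S3 Ai Ak Al).
Local Notation Sjkl := (S3 Aj Ak Al).

Local Notation Pi := (power_form Ai Aj Ak Al).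
Local Notation Pj := (power_form Aj Ai Ak Al).
Local Notation Pk := (power_form Ak Ai Aj Al).
Local Notation Pl := (power_form Al Ai Aj Ak).

Lemma first_det_combination :
  2 * det3 xkl Sikl Sjkl (- xij) Sijk Sijl 0 xik xjl =
  (xjl + xkl - xjk) * Pi + (xil - xik - xkl) * Pj
  + (xij + xjl - xil) * Pk + (xjk - xij - xik) * Pl.
Proof. unfold det3, power_form, S3, sqd; ring. Qed.

Lemma second_det_combination :
  2 * det3 xkl Sikl Sjkl xij Sijl Sijk 0 xil xjk =
  (xjl - xjk - xkl) * Pi + (xil - xik + xkl) * Pj
  + (xjl - xij - xil) * Pk + (xij - xik + xjk) * Pl.
Proof. unfold det3, power_form, S3, sqd; ring. Qed.

Lemma third_det_combination :
  2 * det3 xjk Sijk Sjkl (- xil) Sikl Sijl 0 xik xjl =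
  (xjk + xjl - xkl) * Pi + (xkl - xik - xil) * Pj
  + (xil + xjl - xij) * Pk + (xij - xik - xjk) * Pl.
Proof. unfold det3, power_form, S3, sqd; ring. Qed.

Variables (O : point) (rho : R).
Hypotheses (hi : sqd O Ai = rho) (hj : sqd O Aj = rho)
           (hk : sqd O Ak = rho) (hl : sqd O Al = rho).

Lemma concyclic_dets_vanish :
  det3 xkl Sikl Sjkl (- xij) Sijk Sijl 0 xik xjl = 0 /\
  det3 xkl Sikl Sjkl xij Sijl Sijk 0 xil xjk = 0 /\
  det3 xjk Sijk Sjkl (- xil) Sikl Sijl 0 xik xjl = 0.
Proof.
  pose proof (power_form_concyclic O _ _ _ _ rho hi hj hk hl) as Pi0.
  pose proof (power_form_concyclic O _ _ _ _ rho hj hi hk hl) as Pj0.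
  pose proof (power_form_concyclic O _ _ _ _ rho hk hi hj hl) as Pk0.
  pose proof (power_form_concyclic O _ _ _ _ rho hl hi hj hk) as Pl0.
  split; [|split]; apply (Rmult_eq_reg_l 2); try discrR.
  - rewrite first_det_combination, Pi0, Pj0, Pk0, Pl0; ring.
  - rewrite second_det_combination, Pi0, Pj0, Pk0, Pl0; ring.
  - rewrite third_det_combination, Pi0, Pj0, Pk0, Pl0; ring.
Qed.

End FourPoints.

Theorem theorem2p6 (Ai Aj Ak Al : point) :
  Ai <> Aj -> Ai <> Ak -> Ai <> Al -> Aj <> Ak -> Aj <> Al -> Ak <> Al ->
  concyclic_ccw Ai Aj Ak Al ->
  det3 (sqd Ak Al) (S3 Ai Ak Al) (S3 Aj Ak Al)
       (- sqd Ai Aj) (S3 Ai Aj Ak) (S3 Ai Aj Al)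
       0 (sqd Ai Ak) (sqd Aj Al) = 0 /\
  det3 (sqd Ak Al) (S3 Ai Ak Al) (S3 Aj Ak Al)
       (sqd Ai Aj) (S3 Ai Aj Al) (S3 Ai Aj Ak)
       0 (sqd Ai Al) (sqd Aj Ak) = 0 /\
  det3 (sqd Aj Ak) (S3 Ai Aj Ak) (S3 Aj Ak Al)
       (- sqd Ai Al) (S3 Ai Ak Al) (S3 Ai Aj Al)
       0 (sqd Ai Ak) (sqd Aj Al) = 0.
Proof.
  intros _ _ _ _ _ _ (C & r & t1 & t2 & t3 & t4 & _ & -> & -> & -> & -> & _).
  apply (concyclic_dets_vanish _ _ _ _ C (r ^ 2)); apply sqd_circ_pt.
Qed.
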